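(* Let $k \geq 2$ and let $G_1, \dots, G_k$ be finite simple Class 1 graphs. Then for each $i$ there is a finite simple graph $G_i^*$ obtained from $G_i$ by adding extra vertices and edges, such that $G_i^*$ is $\Delta(G_i)$-regular and Class 1, and such that whenever two edges of $G_1 \square \cdots \square G_k$ are at distance at least $3$ in $G_1 \square \cdots \square G_k$, they are also at distance at least $3$ in $G_1^* \square \cdots \square G_k^*$.
   Context: A graph $G$ is Class 1 if its chromatic index $\chi'(G)$ equals its maximum degree $\Delta(G)$. The Cartesian product $G \square H$ has vertex set $V(G)\times V(H)$, with $(u_1,u_2)$ adjacent to $(v_1,v_2)$ iff either $u_1=v_1$ and $u_2v_2 \in E(H)$, or $u_2=v_2$ and $u_1v_1\in E(G)$; iterated products are defined accordingly. The distance between vertices is the length of a shortest path between them (infinite if none), and the distance between edges $xy$ and $zw$ is $\min\{d(x,z),d(x,w),d(y,z),d(y,w)\}$. *)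

From mathcomp Require Import all_boot.
Set Implicit Arguments. Unset Strict Implicit. Unset Printing Implicit Defensive.

Record sgraph := SGraph {
  vert : finType;
  adj : rel vert;
  adj_sym : symmetric adj;
  adj_irr : irreflexive adj }.
Arguments adj : clear implicits.

Definition deg (G : sgraph) (x : vert G) : nat := #|[set y | adj G x y]|.

(* maximum degree Delta(G) (0 for the empty graph) *)
Definition maxdeg (G : sgraph) : nat := \max_(x : vert G) deg x.

Definition regular (G : sgraph) (r : nat) : Prop := forall x : vert G, deg x = r.

Definition edge_colorable (G : sgraph) (c : nat) : Prop :=
  exists col : vert G -> vert G -> nat,
    (forall x y, adj G x y -> col x y = col y x /\ col x y < c) /\
    (forall x y z, adj G x y -> adj G x z -> y != z -> col x y != col x z).

Definition is_chromatic_index (G : sgraph) (c : nat) : Prop :=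
  edge_colorable G c /\ forall c', edge_colorable G c' -> c <= c'.

Definition class1 (G : sgraph) : Prop := is_chromatic_index G (maxdeg G).

Definition prod_vert k (G : 'I_k -> sgraph) := {dffun forall i : 'I_k, vert (G i)}.

Definition prod_adj k (G : 'I_k -> sgraph) : rel (prod_vert G) :=
  fun x y => [exists i : 'I_k, adj (G i) (x i) (y i) &&
                 [forall j : 'I_k, (j != i) ==> (x j == y j)]].

Definition dist_le (T : Type) (e : rel T) (n : nat) (x y : T) : Prop :=
  exists p : seq T, [/\ path e x p, last x p = y & size p <= n].

Definition edge_dist_ge3 (T : Type) (e : rel T) (x y z w : T) : Prop :=
  ~ dist_le e 2 x z /\ ~ dist_le e 2 x w /\ ~ dist_le e 2 y z /\ ~ dist_le e 2 y w.

Arguments prod_adj {k} G.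
Definition prod_map k (G H : 'I_k -> sgraph) (f : forall i, vert (G i) -> vert (H i))
  (x : prod_vert G) : prod_vert H := [ffun i => f i (x i)].

From mathcomp Require Import all_boot.
From Stdlib Require Import IndefiniteDescription.
Set Implicit Arguments. Unset Strict Implicit. Unset Printing Implicit Defensive.

(** Fix a proper edge colouring of G with D = Delta(G) colours and take 2^D
    copies of G, indexed by s in {0,1}^D.  Whenever colour c is missing at u,
    join (u, s) to (u, s with bit c flipped) and give that edge colour c.  The
    result is D-regular, properly D-coloured, and contains G as the copy s = 0.
    The projection (u, s) |-> u maps every edge to an edge or to a single
    vertex, and so does its coordinatewise extension to the Cartesian products;
    hence it does not increase distances, and since it is a left inverse of
    the embedding, distances between embedded vertices can only grow. *)

Section WeakHom.
Variables (T U : Type) (e : rel T) (e' : rel U) (p : T -> U).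

Definition weak_hom : Prop := forall a b, e a b -> e' (p a) (p b) \/ p a = p b.

Hypothesis pW : weak_hom.

Lemma path_weak_hom a q : path e a q ->
  exists q', [/\ path e' (p a) q', last (p a) q' = p (last a q) & size q' <= size q].
Proof.
elim: q a => [|b q IHq] a /=; first by exists [::].
case/andP=> eab /IHq [q' [pathq' lastq' sizeq']].
case: (pW eab) => [e'ab | ->]; last by exists q'; split=> //; exact: leqW.
by exists (p b :: q'); rewrite /= e'ab.
Qed.

Lemma dist_le_weak_hom n a b : dist_le e n a b -> dist_le e' n (p a) (p b).
Proof.
case=> q [/path_weak_hom [q' [pathq' lastq' sizeq']] <- sizeq].
by exists q'; split; last exact: leq_trans sizeq.
Qed.

Lemma edge_dist_ge3_weak_hom (f : U -> T) : cancel f p ->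
  forall x y z w, edge_dist_ge3 e' x y z w -> edge_dist_ge3 e (f x) (f y) (f z) (f w).
Proof.
move=> fK x y z w [dxz [dxw [dyz dyw]]].
by split; [|split; [|split]] => /dist_le_weak_hom; rewrite !fK.
Qed.

End WeakHom.

Section Product.
Variables (k : nat) (G H : 'I_k -> sgraph).

Lemma prod_map_can (f : forall i, vert (G i) -> vert (H i))
    (p : forall i, vert (H i) -> vert (G i)) :
  (forall i, cancel (f i) (p i)) -> cancel (prod_map f) (prod_map p).
Proof. by move=> fK x; apply/ffunP => i; rewrite !ffunE fK. Qed.

Lemma prod_adj_weak_hom (p : forall i, vert (H i) -> vert (G i)) :
  (forall i, weak_hom (adj (H i)) (adj (G i)) (p i)) ->
  weak_hom (prod_adj H) (prod_adj G) (prod_map p).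
Proof.
move=> pW a b /existsP [i /andP [abi /forallP abj]].
have eq_off j : j != i -> p j (a j) = p j (b j) by move/(implyP (abj j))/eqP ->.
case: (pW i _ _ abi) => [pab | pab].
  left; apply/existsP; exists i; rewrite !ffunE pab /=.
  by apply/forallP => j; apply/implyP => /eq_off; rewrite !ffunE => ->.
right; apply/ffunP => j; rewrite !ffunE.
by case: (eqVneq j i) => [-> | /eq_off].
Qed.

End Product.

Lemma edge_colorable_embed (G H : sgraph) (f : vert G -> vert H) c :
  injective f -> (forall x y, adj G x y -> adj H (f x) (f y)) ->
  edge_colorable H c -> edge_colorable G c.
Proof.
move=> f_inj f_adj [col [colP colD]].
exists (fun x y => col (f x) (f y)); split=> [x y /f_adj | x y z /f_adj xy /f_adj xz yz].
  exact: colP.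
by apply: colD xy xz _; rewrite (inj_eq f_inj).
Qed.

Lemma deg_le_maxdeg (G : sgraph) (x : vert G) : deg x <= maxdeg G.
Proof. exact: leq_bigmax. Qed.

Lemma maxdeg_regular (G : sgraph) r (x0 : vert G) : regular G r -> maxdeg G = r.
Proof.
move=> Greg; apply/eqP; rewrite eqn_leq -{2}(Greg x0) deg_le_maxdeg andbT.
by apply/bigmax_leqP => x _; rewrite Greg.
Qed.

Lemma regular_maxdeg0 (G : sgraph) : maxdeg G = 0 -> regular G 0.
Proof. by move=> G0 x; apply/eqP; rewrite -leqn0 -G0 deg_le_maxdeg. Qed.

Section Regularization.
Variables (G : sgraph) (n : nat) (col : vert G -> vert G -> nat).
Local Notation D := n.+1.
Hypothesis colP : forall x y, adj G x y -> col x y = col y x /\ col x y < D.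
Hypothesis colD : forall x y z, adj G x y -> adj G x z -> y != z -> col x y != col x z.

Definition present u (c : 'I_D) : bool := [exists v, adj G u v && (col u v == c)].

Lemma card_present u : #|[set c | present u c]| = deg u.
Proof.
have colu_inj : {in [set v | adj G u v] &, injective (fun v => inord (col u v) : 'I_D)}.
  move=> v w; rewrite !inE => uv uw /(congr1 val) /=.
  rewrite !inordK ?(colP uv).2 ?(colP uw).2 // => eq_col.
  by apply: contraTeq (colD uv uw) _; apply/eqP.
rewrite /deg -(card_in_imset colu_inj); apply: eq_card => c; rewrite inE.
apply/existsP/imsetP => [[v /andP [uv /eqP colc]] | [v]].
  by exists v; rewrite ?inE //; apply: val_inj; rewrite /= inordK ?colc.
by rewrite inE => uv ->; exists v; rewrite uv /= inordK ?(colP uv).2.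
Qed.

Definition flip (c : 'I_D) (s : {ffun 'I_D -> bool}) : {ffun 'I_D -> bool} :=
  [ffun j => if j == c then ~~ s j else s j].

Lemma flipK c : involutive (flip c).
Proof. by move=> s; apply/ffunP => j; rewrite !ffunE; case: eqP; rewrite ?negbK. Qed.

Lemma flip_neq c s : flip c s != s.
Proof. by apply/eqP => /ffunP /(_ c); rewrite ffunE eqxx; case: (s c). Qed.

Lemma flip_inj s c c' : flip c s = flip c' s -> c = c'.
Proof. by move=> /ffunP /(_ c); rewrite !ffunE eqxx; case: eqP => // _; case: (s c). Qed.

Definition reg_vert : finType := (vert G * {ffun 'I_D -> bool})%type.

Definition reg_adj : rel reg_vert := fun a b =>
  ((a.2 == b.2) && adj G a.1 b.1) ||
  ((a.1 == b.1) && [exists c, ~~ present a.1 c && (b.2 == flip c a.2)]).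

Lemma reg_adjP a b : reg_adj a b ->
  (b.2 = a.2 /\ adj G a.1 b.1) \/ exists2 c, ~~ present a.1 c & b = (a.1, flip c a.2).
Proof.
case: a b => [u s] [v t]; rewrite /reg_adj /=.
by case/orP=> [/andP [/eqP -> uv] | /andP [/eqP -> /existsP [c /andP [c_abs /eqP ->]]]];
  [left | right; exists c].
Qed.

Lemma reg_adj_sym : symmetric reg_adj.
Proof.
move=> [u s] [v t]; rewrite /reg_adj /= adj_sym [s == t]eq_sym; congr (_ || _).
case: (eqVneq u v) => [<- | //] /=.
by apply/existsP/existsP => -[c /andP [c_abs /eqP ->]]; exists c; rewrite c_abs flipK /=.
Qed.

Lemma reg_adj_irr : irreflexive reg_adj.
Proof.
move=> [u s]; rewrite /reg_adj /= adj_irr andbF eqxx /=.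
by apply/existsP => -[c /andP [_ /eqP sE]]; move: (flip_neq c s); rewrite -sE eqxx.
Qed.

Definition regularization : sgraph := SGraph reg_adj_sym reg_adj_irr.

Definition reg_embed (u : vert G) : vert regularization := (u, [ffun => false]).

Lemma reg_embed_inj : injective reg_embed.
Proof. by move=> u v []. Qed.

Lemma reg_embed_adj u v : adj G u v -> adj regularization (reg_embed u) (reg_embed v).
Proof. by move=> uv; rewrite /= /reg_adj /= eqxx uv. Qed.

Lemma reg_proj_weak_hom : weak_hom (adj regularization) (adj G) (fun a => a.1).
Proof. by move=> a b /reg_adjP [[_ ab] | [c _ ->]]; [left | right]. Qed.

Definition reg_col (a b : reg_vert) : nat :=
  if a.2 == b.2 then col a.1 b.1 else
  if [pick c | b.2 == flip c a.2] is Some c then val c else 0.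

Lemma reg_col_flip a c : reg_col a (a.1, flip c a.2) = c.
Proof.
rewrite /reg_col /= eq_sym (negbTE (flip_neq _ _)).
by case: pickP => [c' /eqP /flip_inj -> | /(_ c)]; rewrite ?eqxx.
Qed.

Lemma regularization_colorable : edge_colorable regularization D.
Proof.
exists reg_col; split.
  move=> a b /reg_adjP [[sE ab] | [c _ ->]]; first by rewrite /reg_col sE eqxx; exact: colP.
  case: a => u s; rewrite reg_col_flip; split=> //.
  by have := reg_col_flip (u, flip c s) c; rewrite /= flipK.
move=> a b b' /reg_adjP [[sE ab] | [c c_abs ->]] /reg_adjP [[sE' ab'] | [c' c'_abs ->]] bb'.
- rewrite /reg_col sE sE' !eqxx; apply: colD => //; apply: contra bb' => /eqP b1E.
  by rewrite [b]surjective_pairing [b']surjective_pairing b1E sE sE'.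
- rewrite reg_col_flip /reg_col sE eqxx; apply: contra c'_abs => /eqP colE.
  by apply/existsP; exists b.1; rewrite ab colE /=.
- rewrite reg_col_flip /reg_col sE' eqxx; apply: contra c_abs => /eqP colE.
  by apply/existsP; exists b'.1; rewrite ab' -colE /=.
- by rewrite !reg_col_flip; apply: contra bb' => /eqP /val_inj ->.
Qed.

Lemma reg_nbhdE a : [set b | adj regularization a b] =
  ((fun v => (v, a.2)) @: [set v | adj G a.1 v]) :|:
  ((fun c => (a.1, flip c a.2)) @: ~: [set c | present a.1 c]).
Proof.
apply/setP => -[v t]; rewrite !inE; apply/idP/orP.
  case/reg_adjP => [[/= -> av] | [c c_abs [-> ->]]].
    by left; apply/imsetP; exists v; rewrite ?inE.
  by right; apply/imsetP; exists c; rewrite ?inE.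
case=> /imsetP [x]; rewrite !inE => ax [-> ->]; rewrite /= /reg_adj /=.
  by rewrite eqxx ax.
by rewrite adj_irr andbF eqxx /=; apply/existsP; exists x; rewrite ax eqxx.
Qed.

(* For a = (u, s), the two parts of the neighbourhood have sizes deg u and D - deg u. *)
Lemma regularization_regular : regular regularization D.
Proof.
move=> a; rewrite /deg reg_nbhdE cardsU.
have -> : ((fun v => (v, a.2)) @: [set v | adj G a.1 v]) :&:
          ((fun c => (a.1, flip c a.2)) @: ~: [set c | present a.1 c]) = set0.
  apply/setP => b; rewrite !inE; apply/negbTE/andP.
  by case=> /imsetP [x _ ->] /imsetP [c _ [_ /esym/eqP]]; rewrite (negbTE (flip_neq _ _)).
have copy_inj : injective (fun v => (v, a.2) : reg_vert) by move=> v w [].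
have flip_copy_inj : injective (fun c => (a.1, flip c a.2) : reg_vert).
  by move=> c c' [] /flip_inj.
by rewrite cards0 subn0 !card_imset // -/(deg a.1) -card_present cardsC card_ord.
Qed.

Lemma regularization_class1 (u0 : vert G) : class1 G -> maxdeg G = D -> class1 regularization.
Proof.
move=> [_ Gmin] GD; rewrite /class1 (maxdeg_regular (reg_embed u0) regularization_regular).
split=> [|c colc]; first exact: regularization_colorable.
by rewrite -GD; apply/Gmin/(edge_colorable_embed reg_embed_inj reg_embed_adj colc).
Qed.

End Regularization.

Definition regularizes (G Gs : sgraph) (f : vert G -> vert Gs) (p : vert Gs -> vert G) :=
  [/\ cancel f p, (forall x y, adj G x y -> adj Gs (f x) (f y)),
      weak_hom (adj Gs) (adj G) p, regular Gs (maxdeg G) & class1 Gs].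

Lemma class1_regularizes (G : sgraph) : class1 G ->
  {Gs : sgraph & {f : vert G -> vert Gs & {p : vert Gs -> vert G | regularizes f p}}}.
Proof.
move=> Gc1; have [col [colP colD]] := constructive_indefinite_description _ Gc1.1.
case GD: (maxdeg G) colP => [|n] colP.
  by exists G, id, id; split=> //; [move=> x y; left | rewrite GD; exact: regular_maxdeg0].
have [u0 _ | G_empty] := pickP (@predT (vert G)); last first.
  have : maxdeg G <= 0 by apply/bigmax_leqP => x; move: (G_empty x).
  by rewrite GD.
exists (regularization n col), (reg_embed n col), (fun a => a.1).
split=> //; [exact: reg_embed_adj | exact: reg_proj_weak_hom | |].
  by rewrite GD; exact: regularization_regular.
exact: regularization_class1 u0 Gc1 GD.
Qed.

Theorem lemma2 (k : nat) (hk : 2 <= k) (G : 'I_k -> sgraph) :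
  (forall i, class1 (G i)) ->
  exists (Gs : 'I_k -> sgraph) (f : forall i, vert (G i) -> vert (Gs i)),
    [/\ (forall i, injective (f i)),
        (forall i (x y : vert (G i)), adj (G i) x y -> adj (Gs i) (f i x) (f i y)),
        (forall i, regular (Gs i) (maxdeg (G i))),
        (forall i, class1 (Gs i)) &
        (forall x y z w : prod_vert G,
           prod_adj G x y -> prod_adj G z w ->
           edge_dist_ge3 (prod_adj G) x y z w ->
           edge_dist_ge3 (prod_adj Gs) (prod_map f x) (prod_map f y)
                                       (prod_map f z) (prod_map f w))].
Proof.
move=> Gc1; pose R i := class1_regularizes (Gc1 i).
pose f i := projT1 (projT2 (R i)); pose p i := sval (projT2 (projT2 (R i))).
have Rf i : regularizes (f i) (p i) := proj2_sig (projT2 (projT2 (R i))).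
have fK i : cancel (f i) (p i) by case: (Rf i).
have pW i : weak_hom (adj (projT1 (R i))) (adj (G i)) (p i) by case: (Rf i).
exists (fun i => projT1 (R i)), f; split=> [i | i | i | i | x y z w _ _].
- exact: can_inj (fK i).
- by case: (Rf i).
- by case: (Rf i).
- by case: (Rf i).
exact: edge_dist_ge3_weak_hom (prod_adj_weak_hom pW) _ (prod_map_can fK) x y z w.
Qed.
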